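(* Let $\mathcal A$ be an S-ring over a finite group $G$ and $H$ a normal subgroup of $G$ with $H\in\mathcal H(\mathcal A)$. Let $\mathcal A'$ be the S-ring over $G$ generated by $\mathcal A$ and the cosets of $G$ by $H$, and let $H'=\{x\mapsto xh:\ h\in H\}$. Then $\mathrm{Aut}(\mathcal A)$ normalizes the group $\langle\mathrm{Aut}(\mathcal A'),H'\rangle$.
   Context: An S-ring over a finite group $G$ is a subring $\mathcal A$ of $\mathbb Z[G]$ with $\mathbb Z$-basis $\{\sum_{x\in X}x: X\in\mathcal S(\mathcal A)\}$ for a partition $\mathcal S(\mathcal A)$ of $G$ into nonempty basic sets with $\{1\}\in\mathcal S(\mathcal A)$ and $X\in\mathcal S(\mathcal A)\Rightarrow X^{-1}\in\mathcal S(\mathcal A)$; $\mathcal S^*(\mathcal A)$ is the set of unions of basic sets and $\mathcal H(\mathcal A)$ the set of subgroups of $G$ lying in $\mathcal S^*(\mathcal A)$. The S-ring generated by $\mathcal A$ and sets $Y_j$ is the smallest S-ring $\mathcal A'$ with $\mathcal S^*(\mathcal A)\cup\{Y_j\}\subseteq\mathcal S^*(\mathcal A')$. For $X\subseteq G$ let $R_G(X)=\{(g,xg): g\in G, x\in X\}$. The Cayley scheme of $\mathcal A$ is the partition $\{R_G(X): X\in\mathcal S(\mathcal A)\}$ of $G\times G$; $\mathrm{Aut}(\mathcal A)$ is the group of permutations $f$ of $G$ with $1^f=1$ and $R_G(X)^f=R_G(X)$ for all $X\in\mathcal S(\mathcal A)$. *)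

From HB Require Import structures.
From mathcomp Require Import all_boot all_order all_algebra all_fingroup.
Set Implicit Arguments. Unset Strict Implicit. Unset Printing Implicit Defensive.
Import GRing.Theory.

(* The finite group G is the whole of a finGroupType gT.
   Elements of the group ring Z[G] are represented as functions gT -> int. *)

Section SRings.
Variable gT : finGroupType.

(* indicator of a set X, i.e. the element  sum_{x in X} x  of Z[G] *)
Definition ind (X : {set gT}) : gT -> int := fun z => Posz (z \in X).

Definition gconv (f g : gT -> int) : gT -> int :=
  fun z => (\sum_(x : gT) f x * g (x^-1 * z)%g)%R.

Definition in_span (S : {set {set gT}}) (f : gT -> int) : Prop :=
  exists c : {set gT} -> int, forall z, f z = (\sum_(X in S) c X * ind X z)%R.

(* S is the set of basic sets of an S-ring over gT: a partition of G into
   nonempty sets, {1} is basic, closed under inversion, and the Z-span of the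
   basic elements is closed under the product of Z[G] (it contains 1 = ind [set 1]
   and is closed under addition automatically; by bilinearity closure under
   products amounts to closure on products of basis elements). *)
Definition is_Sring (S : {set {set gT}}) : Prop :=
  [/\ partition S [set: gT],
      [set 1%g] \in S,
      (forall X, X \in S -> (X^-1)%g \in S) &
      (forall X Y, X \in S -> Y \in S -> in_span S (gconv (ind X) (ind Y)))].

Definition Sstar (S : {set {set gT}}) (Y : {set gT}) : Prop :=
  exists2 T : {set {set gT}}, T \subset S & cover T = Y.

Definition in_HA (S : {set {set gT}}) (H : {group gT}) : Prop := Sstar S H.

Definition generated_Sring (S : {set {set gT}}) (Ys : {set {set gT}})
    (S' : {set {set gT}}) : Prop :=
  [/\ is_Sring S',
      (forall Y, Sstar S Y -> Sstar S' Y),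
      (forall Y, Y \in Ys -> Sstar S' Y) &
      (forall S'', is_Sring S'' ->
         (forall Y, Sstar S Y -> Sstar S'' Y) ->
         (forall Y, Y \in Ys -> Sstar S'' Y) ->
         forall Y, Sstar S' Y -> Sstar S'' Y)].

Definition RG (X : {set gT}) : {set gT * gT} :=
  [set p : gT * gT | (p.2 * p.1^-1)%g \in X].

Definition AutS (S : {set {set gT}}) : {set {perm gT}} :=
  [set f : {perm gT} | (f 1%g == 1%g) &&
     [forall X in S, [set (f p.1, f p.2) | p in RG X] == RG X]].

Definition rmul_perm (h : gT) : {perm gT} := perm (@mulIg gT h).

Definition Hright (H : {set gT}) : {set {perm gT}} := [set rmul_perm h | h in H].

End SRings.

From HB Require Import structures.
From mathcomp Require Import all_boot all_order all_algebra all_fingroup.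
Local Open Scope group_scope.
Set Implicit Arguments. Unset Strict Implicit. Unset Printing Implicit Defensive.

(* For a permutation phi of G, the sets Y with R_G(Y) phi-invariant form a
   Boolean algebra closed under inversion, containing {1}, on which the
   structure constants of Z[G] are constant; so they are S^* of an S-ring.
   By minimality of A' this gives Aut(A') = {tau : tau 1 = 1, tau preserves
   R_G(X) for X in S^*(A), and tau x in Hx for all x}.  Each condition is
   preserved by conjugation by f in Aut(A), since f preserves R_G(H); and for
   h in H the permutation (x |-> xh)^f differs from x |-> x f(h) by an element
   of Aut(A'). *)

Section RGStable.
Variable gT : finGroupType.
Implicit Types (phi psi f : {perm gT}) (h x y : gT) (X Y Z : {set gT}).

Definition RG_stable phi Y : bool :=
  [forall u, forall v, (v * u^-1 \in Y) == (phi v * (phi u)^-1 \in Y)].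

Lemma RG_stableP phi Y :
  reflect (forall u v, (v * u^-1 \in Y) = (phi v * (phi u)^-1 \in Y))
          (RG_stable phi Y).
Proof.
apply: (iffP forallP) => [stY u v | stY u]; first by have /forallP/(_ v)/eqP := stY u.
by apply/forallP => v; rewrite stY.
Qed.

Lemma RG_stable_imageP phi X :
  reflect ([set (phi p.1, phi p.2) | p in RG X] = RG X) (RG_stable phi X).
Proof.
apply: (iffP (RG_stableP _ _)) => [stX | imX u v].
  apply/setP => -[a b]; apply/imsetP/idP => [[[u v]] | abX].
    by rewrite !inE /= => uvX [-> ->]; rewrite -stX.
  exists (phi^-1 a, phi^-1 b); last by rewrite /= !permKV.
  by rewrite inE /= stX !permKV; rewrite inE in abX.
apply/idP/idP => uvX.
  have : (phi u, phi v) \in RG X by rewrite -imX; apply/imsetP; exists (u, v); rewrite ?inE.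
  by rewrite inE.
have : (phi u, phi v) \in RG X by rewrite inE.
by rewrite -imX => /imsetP [[a b]]; rewrite inE => abX [/perm_inj-> /perm_inj->].
Qed.

Lemma RG_stable_permM phi psi Y :
  RG_stable phi Y -> RG_stable psi Y -> RG_stable (phi * psi) Y.
Proof.
by move=> /RG_stableP st1 /RG_stableP st2; apply/RG_stableP => u v; rewrite !permM -st2.
Qed.

Lemma RG_stable_permV phi Y : RG_stable phi Y -> RG_stable phi^-1 Y.
Proof.
by move=> /RG_stableP stY; apply/RG_stableP => u v; rewrite [RHS]stY !permKV.
Qed.

Lemma RG_stable_conj phi f Y :
  RG_stable f Y -> RG_stable phi Y -> RG_stable (phi ^ f) Y.
Proof. by move=> stfY stY; rewrite conjgE !RG_stable_permM ?RG_stable_permV. Qed.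

Lemma RG_stable_rmul h Y : RG_stable (rmul_perm h) Y.
Proof. by apply/RG_stableP => u v; rewrite !permE invMg mulgA mulgK. Qed.

Lemma RG_stableT phi : RG_stable phi [set: gT].
Proof. by apply/RG_stableP => u v; rewrite !inE. Qed.

Lemma RG_stableC phi Y : RG_stable phi Y -> RG_stable phi (~: Y).
Proof. by move=> /RG_stableP stY; apply/RG_stableP => u v; rewrite !inE stY. Qed.

Lemma RG_stableI phi Y Z :
  RG_stable phi Y -> RG_stable phi Z -> RG_stable phi (Y :&: Z).
Proof.
by move=> /RG_stableP stY /RG_stableP stZ; apply/RG_stableP => u v; rewrite !inE stY stZ.
Qed.

Lemma RG_stableV phi Y : RG_stable phi Y -> RG_stable phi Y^-1.
Proof.
by move=> /RG_stableP stY; apply/RG_stableP => u v; rewrite !inE !invMg !invgK stY.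
Qed.

Lemma RG_stable1 phi : RG_stable phi [set 1].
Proof.
apply/RG_stableP => u v; rewrite !inE -!eq_mulgV1.
by apply/eqP/eqP => [-> | /perm_inj].
Qed.

Lemma RG_stable_cover phi (T : {set {set gT}}) :
  {in T, forall X, RG_stable phi X} -> RG_stable phi (cover T).
Proof.
move=> stT; apply/RG_stableP => u v.
apply/bigcupP/bigcupP => -[X XT]; have /RG_stableP stX := stT X XT.
  by rewrite stX; exists X.
by rewrite -stX; exists X.
Qed.

Lemma RG_stable_mem phi Y x :
  phi 1 = 1 -> RG_stable phi Y -> (phi x \in Y) = (x \in Y).
Proof. by move=> phi1 /RG_stableP/(_ 1 x); rewrite phi1 invg1 !mulg1. Qed.

Lemma RG_stable_mem_rcoset phi Y x y :
  RG_stable phi Y -> (phi y \in Y :* phi x) = (y \in Y :* x).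
Proof. by move=> /RG_stableP stY; rewrite !mem_rcoset -stY. Qed.

Lemma AutSP (S : {set {set gT}}) phi :
  reflect (phi 1 = 1 /\ {in S, forall X, RG_stable phi X}) (phi \in AutS S).
Proof.
rewrite inE; apply: (iffP andP) => [[/eqP phi1 /forall_inP stS] | [phi1 stS]].
  by split => // X /stS /eqP /RG_stable_imageP.
split; first exact/eqP.
by apply/forall_inP => X /stS /RG_stable_imageP ->.
Qed.

Lemma AutS_Sstar (S : {set {set gT}}) phi Y :
  phi \in AutS S -> Sstar S Y -> RG_stable phi Y.
Proof.
move=> /AutSP [_ stS] [T /subsetP TS <-].
by apply: RG_stable_cover => X /TS /stS.
Qed.

End RGStable.

Section StableSring.
Variables (gT : finGroupType) (phi : {perm gT}).
Implicit Types (x y z : gT) (X Y W : {set gT}).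

Definition stable_atom z : {set gT} :=
  \bigcap_(Y | RG_stable phi Y && (z \in Y)) Y.

Definition stable_atoms : {set {set gT}} := [set stable_atom z | z in [set: gT]].

Lemma stable_atom_stable z : RG_stable phi (stable_atom z).
Proof.
apply: (big_ind (RG_stable phi)) => [||Y /andP []//].
  exact: RG_stableT.
exact: RG_stableI.
Qed.

Lemma mem_stable_atom z : z \in stable_atom z.
Proof. by apply/bigcapP => Y /andP []. Qed.

Lemma stable_atom_min z Y : RG_stable phi Y -> z \in Y -> stable_atom z \subset Y.
Proof. by move=> stY zY; apply: bigcap_inf; rewrite stY zY. Qed.

Lemma stable_atom_eq y z : y \in stable_atom z -> stable_atom y = stable_atom z.
Proof.
move=> yz; apply/eqP; rewrite eqEsubset stable_atom_min ?stable_atom_stable //=.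
apply: stable_atom_min; first exact: stable_atom_stable.
apply: contraT => zNy.
have : stable_atom z \subset ~: stable_atom y.
  by apply: stable_atom_min; rewrite ?inE // RG_stableC ?stable_atom_stable.
by move/subsetP/(_ y yz); rewrite inE mem_stable_atom.
Qed.

Lemma stable_atom1 : stable_atom 1 = [set 1].
Proof.
apply/eqP; rewrite eqEsubset stable_atom_min ?RG_stable1 ?set11 //=.
by rewrite sub1set mem_stable_atom.
Qed.

Lemma stable_atomV z : (stable_atom z)^-1 = stable_atom z^-1.
Proof.
have stV y : RG_stable phi (stable_atom y)^-1 by apply/RG_stableV/stable_atom_stable.
apply/eqP; rewrite eqEsubset -invSg invgK.
by rewrite !stable_atom_min // inE ?invgK mem_stable_atom.
Qed.

Lemma partition_stable_atoms : partition stable_atoms [set: gT].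
Proof.
apply/and3P; split.
- apply/eqP/setP => x; rewrite inE; apply/bigcupP.
  by exists (stable_atom x); rewrite ?imset_f ?mem_stable_atom.
- apply/trivIsetP => _ _ /imsetP [a _ ->] /imsetP [b _ ->].
  apply: contraR => /pred0Pn [x /andP [xa xb]].
  by rewrite -(stable_atom_eq xa) -(stable_atom_eq xb).
- by apply/imsetP => -[z _ /esym/setP/(_ z)]; rewrite mem_stable_atom inE.
Qed.

Lemma Sstar_stable_atomsP Y : reflect (Sstar stable_atoms Y) (RG_stable phi Y).
Proof.
apply: (iffP idP) => [stY | [T /subsetP Tatoms <-]].
  exists [set stable_atom z | z in Y].
    by apply/subsetP => _ /imsetP [z _ ->]; rewrite imset_f.
  apply/setP => x; apply/bigcupP/idP => [[_ /imsetP [z zY ->]] | xY].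
    exact/subsetP/stable_atom_min.
  by exists (stable_atom x); rewrite ?imset_f ?mem_stable_atom.
apply: RG_stable_cover => _ /Tatoms /imsetP [z _ ->].
exact: stable_atom_stable.
Qed.

Lemma in_span_stable_atoms (F : gT -> int) :
  (forall u v, F (v * u^-1) = F (phi v * (phi u)^-1)) -> in_span stable_atoms F.
Proof.
move=> stF.
have F_atom y z : y \in stable_atom z -> F y = F z.
  have stFz : RG_stable phi [set t | F t == F z].
    by apply/RG_stableP => u v; rewrite !inE stF.
  by move/(subsetP (stable_atom_min stFz _)); rewrite !inE eqxx => /(_ isT)/eqP.
exists (fun W => F (repr W)) => z.
rewrite (bigD1 (stable_atom z)) ?imset_f //= big1 => [|_ /andP [/imsetP [w _ ->] neq]].
  rewrite /ind mem_stable_atom GRing.mulr1 GRing.addr0.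
  by rewrite (F_atom _ _ (mem_repr _ (mem_stable_atom z))).
rewrite /ind; case: (boolP (z \in stable_atom w)) => [zw | _]; last by rewrite GRing.mulr0.
by move: neq; rewrite (stable_atom_eq zw) eqxx.
Qed.

Lemma gconv_ind_stable X Y u v : RG_stable phi X -> RG_stable phi Y ->
  gconv (ind X) (ind Y) (v * u^-1) = gconv (ind X) (ind Y) (phi v * (phi u)^-1).
Proof.
have gconvE a b : gconv (ind X) (ind Y) (b * a^-1)
                  = (\sum_w ind X (b * w^-1) * ind Y (w * a^-1))%R.
  rewrite /gconv (reindex_inj (h := fun w => b * w^-1)) => [|c d /mulgI /invg_inj //].
  by apply: eq_bigr => w _; rewrite invMg invgK !mulgA mulgKV.
move=> /RG_stableP stX /RG_stableP stY.
rewrite !gconvE [RHS](reindex_inj (@perm_inj _ phi)) /=.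
by apply: eq_bigr => w _; rewrite /ind -stX -stY.
Qed.

Lemma stable_atoms_Sring : is_Sring stable_atoms.
Proof.
split.
- exact: partition_stable_atoms.
- by rewrite -stable_atom1 imset_f.
- by move=> _ /imsetP [z _ ->]; rewrite stable_atomV imset_f.
move=> _ _ /imsetP [x _ ->] /imsetP [y _ ->]; apply: in_span_stable_atoms => u v.
exact: gconv_ind_stable (stable_atom_stable x) (stable_atom_stable y).
Qed.

End StableSring.

Lemma generated_Sring_AutS (gT : finGroupType) (S Ys S' : {set {set gT}})
    (phi : {perm gT}) :
    generated_Sring S Ys S' -> phi 1 = 1 ->
    (forall Y, Sstar S Y -> RG_stable phi Y) -> {in Ys, forall Y, RG_stable phi Y} ->
  phi \in AutS S'.
Proof.
case=> _ _ _ minS' phi1 stS stYs; apply/AutSP; split=> // X XS'.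
apply/Sstar_stable_atomsP; apply: (minS' _ (stable_atoms_Sring phi)).
- by move=> Y /stS/Sstar_stable_atomsP.
- by move=> Y /stYs/Sstar_stable_atomsP.
by exists [set X]; rewrite ?sub1set ?cover1.
Qed.

Section NormalCosets.
Variables (gT : finGroupType) (H : {group gT}).
Hypothesis nH : H <| [set: gT].
Implicit Types (phi psi f : {perm gT}) (x y : gT).

Definition fixes_rcosets phi := forall x, phi x \in H :* x.

Let normH x : x \in 'N(H) := subsetP (normal_norm nH) x (in_setT x).

Lemma mem_rcoset_coset x y : (x \in H :* y) = (coset H x == coset H y).
Proof. exact/(rcoset_kercosetP (normH x) (normH y))/eqP. Qed.

Lemma RG_stable_rcoset phi x : fixes_rcosets phi -> RG_stable phi (H :* x).
Proof.
move=> fixH; have cosetE y : coset H (phi y) = coset H y.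
  by apply/eqP; rewrite -mem_rcoset_coset.
apply/RG_stableP => u v.
by rewrite !mem_rcoset_coset !morphM ?morphV ?groupV ?normH //= !cosetE.
Qed.

Lemma fixes_rcosetsM phi psi :
  fixes_rcosets phi -> fixes_rcosets psi -> fixes_rcosets (phi * psi).
Proof. by move=> fix1 fix2 x; rewrite permM -(rcoset_eqP (fix1 x)). Qed.

Lemma fixes_rcosetsV phi : fixes_rcosets phi -> fixes_rcosets phi^-1.
Proof. by move=> fixH x; rewrite -{2}(permKV phi x) (rcoset_eqP (fixH _)) rcoset_refl. Qed.

Lemma fixes_rcosets_rmul h : h \in H -> fixes_rcosets (rmul_perm h).
Proof. by move=> hH x; rewrite permE mem_rcoset_coset coset_kerr. Qed.

Lemma fixes_rcosetsJ phi f :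
  RG_stable f H -> fixes_rcosets phi -> fixes_rcosets (phi ^ f).
Proof. by move=> stfH fixH x; rewrite -(permKV f x) permJ RG_stable_mem_rcoset. Qed.

Lemma AutS_fixes_rcosets (S' : {set {set gT}}) phi :
  phi \in AutS S' -> (forall x, Sstar S' (H :* x)) -> fixes_rcosets phi.
Proof.
move=> phiA cosetsS' x; have [phi1 _] := AutSP _ _ phiA.
by rewrite (RG_stable_mem _ phi1 (AutS_Sstar phiA (cosetsS' x))) rcoset_refl.
Qed.

End NormalCosets.

Section AutGenerated.
Variables (gT : finGroupType) (H : {group gT}) (S S' : {set {set gT}}).
Hypotheses (nH : H <| [set: gT]) (HS : in_HA S H).
Hypothesis genS' : generated_Sring S (rcosets H [set: gT]) S'.
Implicit Types (f tau : {perm gT}).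

Lemma AutS_generatedP tau :
  reflect [/\ tau 1 = 1, forall Y, Sstar S Y -> RG_stable tau Y & fixes_rcosets H tau]
          (tau \in AutS S').
Proof.
have [_ SS' cosetsS' _] := genS'.
apply: (iffP idP) => [tauA | [tau1 stS fixH]].
  have [tau1 _] := AutSP _ _ tauA.
  split=> // [Y /SS'|]; first exact: AutS_Sstar.
  by apply: AutS_fixes_rcosets tauA _ => x; apply/cosetsS'/rcosetsP; exists x.
apply: generated_Sring_AutS genS' tau1 stS _ => _ /rcosetsP [x _ ->].
exact: RG_stable_rcoset.
Qed.

Lemma AutS_stable_normal f : f \in AutS S -> RG_stable f H.
Proof. by move/AutS_Sstar; apply. Qed.

Lemma AutS_mem_normal f x : f \in AutS S -> (f x \in H) = (x \in H).
Proof.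
by move=> fA; case/AutSP: (fA) => f1 _; rewrite RG_stable_mem ?AutS_stable_normal.
Qed.

Lemma AutS_generatedJ f tau : f \in AutS S -> tau \in AutS S' -> tau ^ f \in AutS S'.
Proof.
move=> fA /AutS_generatedP [tau1 stS fixH]; have [f1 _] := AutSP _ _ fA.
apply/AutS_generatedP; split.
- by rewrite -{1}f1 permJ tau1 f1.
- by move=> Y SY; apply: RG_stable_conj (AutS_Sstar fA SY) (stS Y SY).
exact: fixes_rcosetsJ (AutS_stable_normal fA) fixH.
Qed.

Lemma AutS_generated_rmulJ f h :
  f \in AutS S -> h \in H -> rmul_perm h ^ f * (rmul_perm (f h))^-1 \in AutS S'.
Proof.
move=> fA hH; have [f1 _] := AutSP _ _ fA; have stfH := AutS_stable_normal fA.
have fhH : f h \in H by rewrite AutS_mem_normal.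
apply/AutS_generatedP; split.
- by rewrite permM; apply: (canLR (permK _)); rewrite -{1}f1 permJ !permE !mul1g.
- move=> Y SY; apply: RG_stable_permM; last exact/RG_stable_permV/RG_stable_rmul.
  exact: RG_stable_conj (AutS_Sstar fA SY) (RG_stable_rmul _ _).
apply: fixes_rcosetsM; first exact: fixes_rcosetsJ stfH (fixes_rcosets_rmul nH hH).
exact/fixes_rcosetsV/fixes_rcosets_rmul.
Qed.

End AutGenerated.

Theorem theorem7p2 (gT : finGroupType) (S : {set {set gT}}) (H : {group gT})
    (S' : {set {set gT}}) :
  is_Sring S ->
  H <| [set: gT] ->
  in_HA S H ->
  generated_Sring S (rcosets H [set: gT]) S' ->
  AutS S \subset 'N(<< AutS S' :|: Hright H >>).
Proof.
move=> _ nH HS genS'; apply/subsetP => f fA.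
rewrite inE -genJ gen_subG; apply/subsetP => _ /imsetP [tau tauA' ->].
case/setUP: tauA' => [tauA | /imsetP [h hH ->]].
  by apply/mem_gen/setUP; left; exact: (AutS_generatedJ nH HS genS').
rewrite -(mulgKV (rmul_perm (f h)) (rmul_perm h ^ f)).
apply: groupM; apply/mem_gen/setUP.
  by left; exact: (AutS_generated_rmulJ nH HS genS').
by right; apply: imset_f; rewrite (AutS_mem_normal HS).
Qed.
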